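(* Let $\mathcal{A}_l\subseteq\mathcal{A}$ be nonempty, let $\alpha=\frac{T_{\mathrm{off}}}{T_{\mathrm{off}}+T}$, let $\pi^*\in\arg\max_{\pi\in\Delta(\mathcal{A}_l)}\log\det\big(V_{(1-\alpha)\pi+\alpha\pi_{\mathrm{off}}}\big)$ and $\tilde\pi^\star=(1-\alpha)\pi^*+\alpha\pi_{\mathrm{off}}$. Then $$d=(1-\alpha)g_{\mathcal{A}_l}(\tilde\pi^\star)+\alpha\sum_{a\in\mathcal{A}}\pi_{\mathrm{off}}(a)\|a\|^2_{V^{-1}_{\tilde\pi^\star}},\qquad (1-\alpha)g_{\mathcal{A}_l}(\tilde\pi^\star)\le d_{\mathrm{eff}},$$ and for every $\pi\in\Delta(\mathcal{A}_l)$, writing $\tilde\pi=(1-\alpha)\pi+\alpha\pi_{\mathrm{off}}$ (with $V_{\tilde\pi}$ invertible), $$d\le(1-\alpha)g_{\mathcal{A}_l}(\tilde\pi)+\alpha\sum_{a\in\mathcal{A}}\pi_{\mathrm{off}}(a)\|a\|^2_{V^{-1}_{\tilde\pi}}.$$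
   Context: $\mathcal{A}\subset\mathbb{R}^d$ is finite with $\mathrm{span}(\mathcal{A})=\mathbb{R}^d$; $\pi_{\mathrm{off}}\in\Delta(\mathcal{A})$ (probability simplex over $\mathcal{A}$); $T,T_{\mathrm{off}}$ are nonnegative integers with $T\ge1$. For $\pi\in\Delta(\mathcal{A})$, $V_\pi=\sum_a\pi(a)aa^\top$, $\|x\|_B=\sqrt{x^\top Bx}$, $g_{\mathcal{B}}(\pi)=\max_{a\in\mathcal{B}}\|a\|^2_{V_\pi^{-1}}$, $\lambda_k(B)$ the $k$-th smallest eigenvalue, and $d_{\mathrm{eff}}=\min\big(\sum_{k=1}^d(1+\frac{T_{\mathrm{off}}}{T}\frac{\lambda_k(V_{\pi_{\mathrm{off}}})}{\max_a\|a\|^2})^{-1},\frac{T}{T_{\mathrm{off}}}g_{\mathcal{A}}(\pi_{\mathrm{off}})\big)$ (the second term being $+\infty$ when undefined). *)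

From HB Require Import structures.
From mathcomp Require Import all_boot all_order all_algebra.
From mathcomp Require Import all_classical all_reals all_analysis.

Set Implicit Arguments.
Unset Strict Implicit.
Unset Printing Implicit Defensive.

Import Order.TTheory GRing.Theory Num.Theory.
Local Open Scope ring_scope.

Section Defs.
Variables (R : realType) (d : nat).

(* A finite set of actions in R^d given as a duplicate-free sequence of
   column vectors; a distribution over a finite set S is a function on
   R^d, nonnegative on S, zero outside S, summing to 1 over S. *)
Definition is_dist (S : seq 'cV[R]_d) (p : 'cV[R]_d -> R) : Prop :=
  [/\ forall a, a \in S -> 0 <= p a,
      forall a, a \notin S -> p a = 0
    & \sum_(a <- S) p a = 1].

(* span(S) = R^d : the matrix whose rows are the a^T has full row space *)
Definition spans (S : seq 'cV[R]_d) : bool :=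
  row_full (\matrix_(i < size S) (nth 0 S i)^T).

Definition Vmat (A : seq 'cV[R]_d) (p : 'cV[R]_d -> R) : 'M[R]_d :=
  \sum_(a <- A) p a *: (a *m a^T).

Definition wnorm2 (B : 'M[R]_d) (a : 'cV[R]_d) : R := (a^T *m B *m a) 0 0.

Definition gfun (A B : seq 'cV[R]_d) (p : 'cV[R]_d -> R) : R :=
  \big[Num.max/0]_(a <- B) wnorm2 (invmx (Vmat A p)) a.

Definition mix (al : R) (p q : 'cV[R]_d -> R) : 'cV[R]_d -> R :=
  fun a => (1 - al) * p a + al * q a.

(* lam k is the k-th smallest eigenvalue (with multiplicity) of M *)
Definition is_sorted_spectrum (M : 'M[R]_d) (lam : 'I_d -> R) : Prop :=
  char_poly M = \prod_(k < d) ('X - (lam k)%:P) /\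
  (forall i j : 'I_d, (i <= j)%N -> lam i <= lam j).

(* d_eff, with the second term +oo when T_off = 0 or V_off is singular *)
Definition deff (A : seq 'cV[R]_d) (poff : 'cV[R]_d -> R) (T Toff : nat)
    (lam : 'I_d -> R) : \bar R :=
  let M := \big[Num.max/0]_(a <- A) (a^T *m a) 0 0 in
  let s1 := \sum_(k < d) (1 + (Toff%:R / T%:R) * (lam k / M))^-1 in
  let s2 := if (0 < Toff)%N && (Vmat A poff \in unitmx)
            then ((T%:R / Toff%:R) * gfun A A poff)%:E
            else +oo%E in
  mine s1%:E s2.

End Defs.

From HB Require Import structures.
From mathcomp Require Import all_boot all_order all_algebra.
From mathcomp Require Import all_classical all_reals all_analysis.
From mathcomp Require Import perm ring lra.

Set Implicit Arguments.
Unset Strict Implicit.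
Unset Printing Implicit Defensive.

Import Order.TTheory GRing.Theory Num.Theory.
Local Open Scope ring_scope.

(* Write V = V_{mix al p poff}. Since V is linear in the design,
   d = tr(V^-1 V) = (1 - al) sum_a p(a) ||a||^2_{V^-1} + al sum_a poff(a) ||a||^2_{V^-1},
   and the first average is at most g_Al, which gives the lower bound for every
   design. For the log-det maximiser pstar, first-order optimality in the direction
   of a point mass at b in Al gives ||b||^2_{V^-1} <= sum_a pstar(a) ||a||^2_{V^-1},
   so this average equals g_Al and the identity follows. For d_eff, V lies below
   (1 - al) max_a |a|^2 I + al V_off and above al V_off in the Loewner order;
   inversion reverses the order, and the trace of the inverse of the former is
   read off the spectrum of V_off. *)

Lemma horner_det_pencil (R : comNzRingType) n (M N : 'M[R]_n) t :
  (\det (map_mx polyC M + 'X *: map_mx polyC N)).[t] = \det (M + t *: N).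
Proof.
rewrite -[_.[t]]/(horner_eval t _) -det_map_mx; congr (\det _).
apply/matrixP => i j; rewrite !mxE rmorphD rmorphM /=.
by rewrite !horner_evalE hornerX !hornerC.
Qed.

Lemma coef0_prod_linear (R : comNzRingType) (I : Type) (s : seq I) (a b : I -> R) :
  (\prod_(i <- s) ((a i)%:P + 'X * (b i)%:P))`_0 = \prod_(i <- s) a i.
Proof.
elim: s => [|x s IH]; first by rewrite !big_nil coef1.
by rewrite !big_cons mulrDl -mulrA coefD coefCM coefXM /= IH addr0.
Qed.

Lemma coef1_prod_linear (R : fieldType) (I : Type) (s : seq I) (a b : I -> R) :
  (forall i, a i != 0) ->
  (\prod_(i <- s) ((a i)%:P + 'X * (b i)%:P))`_1
    = (\prod_(i <- s) a i) * \sum_(i <- s) b i / a i.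
Proof.
move=> a_neq0; elim: s => [|x s IH]; first by rewrite !big_nil coef1 mulr0.
rewrite !big_cons mulrDl -mulrA !coefD !coefCM !coefXM /= IH coefCM.
by rewrite coef0_prod_linear; field; exact: a_neq0.
Qed.

Lemma coef1_det_1DX (R : fieldType) n (F : 'M[R]_n) :
  (\det (1%:M + 'X *: map_mx polyC F))`_1 = \tr F.
Proof.
set M := 1%:M + _.
have ME i j : M i j = (i == j)%:R%:P + 'X * (F i j)%:P.
  by rewrite !mxE; case: (i == j); rewrite ?polyC1 ?polyC0.
(* a non-identity permutation moves at least two indices, each contributing a factor 'X *)
have coef1_moving (s : 'S_n) : s != 1%g -> ((-1) ^+ s * \prod_i M i (s i))`_1 = 0.
  move=> s_neq1; have [i si] : exists i, s i != i.
    apply/existsP; apply: contraR s_neq1 => /existsPn s_fix; apply/eqP/permP => i.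
    by rewrite perm1; apply/eqP; move: (s_fix i); rewrite negbK.
  have ssi : s (s i) != s i by apply: contra si => /eqP /perm_inj /eqP.
  rewrite (bigD1 i) // (bigD1 (s i)) //=.
  rewrite !ME eq_sym (negbTE si) eq_sym (negbTE ssi) !polyC0 !add0r.
  set r := \prod_(_ | _) _; set c := (-1) ^+ _.
  rewrite (_ : c * _ = 'X^2 * (c * (F i (s i))%:P * (F (s i) (s (s i)))%:P * r)).
    by rewrite coefXnM.
  by rewrite expr2; ring.
rewrite /determinant (bigD1 (1%g : 'S_n)) //= coefD coef_sum.
rewrite [X in _ + X]big1 ?addr0; last exact: coef1_moving.
rewrite odd_perm1 expr0 mul1r.
under eq_bigr => i _ do rewrite perm1 ME eqxx.
rewrite (@coef1_prod_linear _ _ _ (fun=> 1)) ?oner_neq0 // big1_eq mul1r.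
by apply: eq_bigr => i _; rewrite divr1.
Qed.

(* Jacobi's formula for the derivative of the determinant, coefficientwise. *)
Lemma coef_det_pencil (R : fieldType) n (M E : 'M[R]_n) : M \in unitmx ->
  let P := \det (map_mx polyC M + 'X *: map_mx polyC E) in
  P`_0 = \det M /\ P`_1 = \det M * \tr (invmx M *m E).
Proof.
move=> uM P; split; first by rewrite -horner_coef0 horner_det_pencil scale0r addr0.
have -> : P = (\det M)%:P * \det (1%:M + 'X *: map_mx polyC (invmx M *m E)).
  rewrite -det_map_mx -det_mulmx mulmxDr mulmx1 -scalemxAr -map_mxM.
  by rewrite mulmxA mulmxV // mul1mx.
by rewrite coefCM coef1_det_1DX.
Qed.

Lemma det_pencil_shift (R : fieldType) n (W : 'M[R]_n) (lam : 'I_n -> R) c al :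
  char_poly W = \prod_(k < n) ('X - (lam k)%:P) -> al != 0 ->
  \det (map_mx polyC (c%:M + al *: W) + 'X *: map_mx polyC 1%:M)
    = \prod_(k < n) ((c + al * lam k)%:P + 'X * 1%:P).
Proof.
(* substitute -(X + c) / al for X in the characteristic polynomial of W *)
move=> chW al_neq0; set q : {poly R} := - al^-1 *: ('X + c%:P).
have alq : (- al)%:P * q = 'X + c%:P.
  by rewrite mul_polyC scalerA mulrNN mulfV // scale1r.
have chWq : \det (q%:M - map_mx polyC W) = \prod_(k < n) (q - (lam k)%:P).
  have := congr1 (comp_poly q) chW; rewrite rmorph_prod /=.
  under eq_bigr => k _ do rewrite rmorphB /= comp_polyX comp_polyC.
  move <-; rewrite /char_poly -det_map_mx; congr (\det _); apply/matrixP => i j.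
  by rewrite !mxE rmorphB /= rmorphMn /= comp_polyX comp_polyC.
rewrite (_ : _ + _ = (- al)%:P *: (q%:M - map_mx polyC W)); last first.
  apply/matrixP => i j; rewrite !mxE mulrBr mulrnAr alq.
  by case: eqP => _; rewrite ?polyCD ?polyCM ?polyCN /=; ring.
rewrite detZ chWq -[n in _ ^+ n]card_ord -prodr_const -big_split /=.
apply: eq_bigr => k _; rewrite mulrBr alq polyCD polyCM mulr1 -mulNr -polyCN.
by ring.
Qed.

Lemma mxtrace_invmx_pencil (R : fieldType) n (W : 'M[R]_n) (lam : 'I_n -> R) c al :
  char_poly W = \prod_(k < n) ('X - (lam k)%:P) -> al != 0 ->
  c%:M + al *: W \in unitmx ->
  \tr (invmx (c%:M + al *: W)) = \sum_(k < n) (c + al * lam k)^-1.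
Proof.
move=> chW al_neq0 uN; set N := c%:M + al *: W.
have [P0 P1] := coef_det_pencil 1%:M uN.
rewrite (det_pencil_shift c chW al_neq0) mulmx1 in P0 P1.
rewrite coef0_prod_linear in P0.
have mu_neq0 k : c + al * lam k != 0.
  by move: k isT; apply/prodf_neq0; rewrite P0 -unitfE -unitmxE.
rewrite coef1_prod_linear // P0 in P1.
apply: (mulfI (_ : \det N != 0)); first by rewrite -unitfE -unitmxE.
by rewrite -P1; congr (_ * _); apply: eq_bigr => k _; rewrite div1r.
Qed.

Lemma poly_lt_horner_right (R : realType) (Q : {poly R}) :
  0 < Q`_1 -> exists2 t : R, 0 < t <= 1 & Q`_0 < Q.[t].
Proof.
move=> Q1_gt0; set S := drop_poly 1 Q.
have QE t : Q.[t] = Q`_0 + t * S.[t].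
  rewrite -{1}(poly_take_drop 1 Q) hornerD hornerM hornerXn expr1 mulrC.
  by rewrite /take_poly horner_poly big_ord1 expr0 mulr1.
have : \forall t \near at_right (0 : R), [/\ 0 < t, t <= 1 & 0 < S.[t]].
  near=> t; split; near: t.
  - exact: nbhs_right_gt.
  - exact: nbhs_right_le ltr01.
  - have := cvg_at_right_filter (@continuous_horner R S 0).
    by move/cvgr_gt; rewrite horner_coef0 coef_drop_poly; apply.
case/filter_ex => t [t_gt0 t_le1 St_gt0]; exists t; first by rewrite t_gt0.
by rewrite QE ltrDl mulr_gt0.
Unshelve. all: by end_near. Qed.

Section QuadraticForms.
Variables (R : realType) (n : nat).
Implicit Types (u v x y b : 'cV[R]_n) (M X Y : 'M[R]_n).

Lemma dotmxC u v : (u^T *m v) 0 0 = (v^T *m u) 0 0.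
Proof. by rewrite -[u in RHS]trmxK -trmx_mul [RHS]mxE. Qed.

Lemma dotmx_ge0 v : 0 <= (v^T *m v) 0 0.
Proof. by rewrite mxE; apply: sumr_ge0 => i _; rewrite mxE -expr2 sqr_ge0. Qed.

Lemma dotmx_gt0 v : v != 0 -> 0 < (v^T *m v) 0 0.
Proof.
move=> v_neq0; rewrite lt0r dotmx_ge0 andbT; apply: contra v_neq0.
rewrite mxE psumr_eq0 => [/allP v0|i _]; last by rewrite mxE -expr2 sqr_ge0.
apply/eqP/matrixP => i j; rewrite (ord1 j) !mxE.
by have := v0 i (mem_index_enum _); rewrite mxE -expr2 sqrf_eq0 => /eqP.
Qed.

Lemma sqr_dotmx_le u v : ((u^T *m v) 0 0) ^+ 2 <= (u^T *m u) 0 0 * (v^T *m v) 0 0.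
Proof.
have [-> | v_neq0] := eqVneq v 0; first by rewrite !mulmx0 !mxE expr0n mulr0.
set s := (v^T *m v) 0 0; set c := (u^T *m v) 0 0.
(* 0 <= |s u - c v|^2 = s (s |u|^2 - c^2) *)
have := dotmx_ge0 (s *: u - c *: v).
have -> : (s *: u - c *: v)^T = s *: u^T - c *: v^T by rewrite linearB !linearZ.
have dotE (w z : 'cV[R]_n) : \sum_j w^T 0 j * z j 0 = (w^T *m z) 0 0 :> R by rewrite mxE.
rewrite !(mulmxBl, mulmxBr) -!scalemxAl -!scalemxAr !mxE !dotE (dotmxC v u) -/s -/c.
have s_gt0 : 0 < s by exact: dotmx_gt0.
nra.
Qed.

Lemma wnorm2D M1 M2 x : wnorm2 (M1 + M2) x = wnorm2 M1 x + wnorm2 M2 x.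
Proof. by rewrite /wnorm2 mulmxDr mulmxDl mxE. Qed.

Lemma wnorm2Z k M x : wnorm2 (k *: M) x = k * wnorm2 M x.
Proof. by rewrite /wnorm2 -scalemxAr -scalemxAl mxE. Qed.

Lemma wnorm2_1 x : wnorm2 1%:M x = (x^T *m x) 0 0.
Proof. by rewrite /wnorm2 mulmx1. Qed.

Lemma wnorm2_tr M x : wnorm2 M x = \tr (M *m (x *m x^T)).
Proof. by rewrite /wnorm2 -trace_mx11 mxtrace_mulC !mulmxA mxtrace_mulC mulmxA. Qed.

Lemma pd_unitmx M : (forall x, x != 0 -> 0 < wnorm2 M x) -> M \in unitmx.
Proof.
move=> M_pd; rewrite unitmxE unitfE; apply/det0P => -[v v_neq0 vM].
have := M_pd v^T; rewrite trmx_eq0 => /(_ v_neq0).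
by rewrite /wnorm2 trmxK vM mul0mx mxE ltxx.
Qed.

(* The determinant does not vanish along the segment from M to 1, on which it
   goes from det M to 1. *)
Lemma psd_det_gt0 M : (forall x, 0 <= wnorm2 M x) -> M \in unitmx -> 0 < \det M.
Proof.
move=> M_psd uM; set P := \det (map_mx polyC M + 'X *: map_mx polyC (1%:M - M)).
have PE s : P.[s] = \det ((1 - s) *: M + s *: 1%:M).
  by rewrite horner_det_pencil scalerBr scalerBl scale1r addrA addrAC.
have P_neq0 s : 0 < s <= 1 -> P.[s] != 0.
  case/andP => s_gt0 s_le1; rewrite PE -unitfE -unitmxE; apply: pd_unitmx => x x_neq0.
  rewrite wnorm2D !wnorm2Z wnorm2_1.
  have := M_psd x; have := dotmx_gt0 x_neq0; nra.
have P0 : P.[0] = \det M by rewrite PE subr0 scale1r scale0r addr0.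
rewrite ltNge; apply/negP => detM_le0.
have [s /andP[s_ge0 s_le1] /rootP Ps0] : exists2 s, 0 <= s <= 1 & root P s.
  apply: poly_ivt; first exact: ler01.
  by rewrite P0 PE subrr scale0r add0r scale1r det1 detM_le0 ler01.
have [s0 | s_neq0] := eqVneq s 0.
  by move: uM; rewrite unitmxE unitfE -P0 -[X in P.[X]]s0 Ps0 eqxx.
by move: (P_neq0 s); rewrite Ps0 eqxx lt0r s_neq0 s_ge0 s_le1 => /(_ isT).
Qed.

Lemma wnorm2_invmx_ge0 X b : X^T = X -> X \in unitmx ->
  (forall y, 0 <= wnorm2 X y) -> 0 <= wnorm2 (invmx X) b.
Proof.
move=> sX uX X_psd; have := X_psd (invmx X *m b).
by rewrite /wnorm2 trmx_mul trmx_inv sX mulmxKV // mulmxA.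
Qed.

(* Inversion reverses the Loewner order: with u = Y^-1 b and z = X^-1 b,
   0 <= |u - z|_X^2 <= b^T u - 2 b^T u + b^T z. *)
Lemma wnorm2_invmx_le X Y b : X^T = X -> X \in unitmx -> Y \in unitmx ->
  (forall y, 0 <= wnorm2 X y) -> (forall y, wnorm2 X y <= wnorm2 Y y) ->
  wnorm2 (invmx Y) b <= wnorm2 (invmx X) b.
Proof.
move=> sX uX uY X_psd XY; set u := invmx Y *m b; set z := invmx X *m b.
have Xz : X *m z = b by rewrite /z mulmxA mulmxV // mul1mx.
have Yu : Y *m u = b by rewrite /u mulmxA mulmxV // mul1mx.
have zX : z^T *m X = b^T by rewrite -sX -trmx_mul Xz.
have -> : wnorm2 (invmx Y) b = (b^T *m u) 0 0 by rewrite /wnorm2 -mulmxA.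
have -> : wnorm2 (invmx X) b = (b^T *m z) 0 0 by rewrite /wnorm2 -mulmxA.
have uXu : wnorm2 X u <= (b^T *m u) 0 0.
  by have := XY u; rewrite {2}/wnorm2 -mulmxA Yu dotmxC.
have trB : (u - z)^T = u^T - z^T by rewrite linearB.
have := X_psd (u - z); rewrite /wnorm2 trB !(mulmxBl, mulmxBr) zX -!mulmxA Xz.
rewrite -[X in 0 <= X -> _]trace_mx11 !raddfB /= !trace_mx11.
rewrite mulmxA -/(wnorm2 X u) (dotmxC u b).
lra.
Qed.

End QuadraticForms.

Section DesignMatrix.
Variables (R : realType) (n : nat) (A : seq 'cV[R]_n).
Implicit Types (p q : 'cV[R]_n -> R) (B : 'M[R]_n) (y : 'cV[R]_n).

Lemma Vmat_mix al p q :
  Vmat A (mix al p q) = (1 - al) *: Vmat A p + al *: Vmat A q.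
Proof.
rewrite /Vmat !scaler_sumr -big_split /=; apply: eq_bigr => a _.
by rewrite /mix [LHS]scalerDl !scalerA.
Qed.

Lemma trmx_Vmat p : (Vmat A p)^T = Vmat A p.
Proof.
by rewrite /Vmat raddf_sum /=; apply: eq_bigr => a _; rewrite linearZ /= trmx_mul trmxK.
Qed.

Lemma wnorm2_Vmat p y :
  wnorm2 (Vmat A p) y = \sum_(a <- A) p a * ((a^T *m y) 0 0) ^+ 2.
Proof.
rewrite /wnorm2 /Vmat mulmx_sumr mulmx_suml summxE; apply: eq_bigr => a _.
rewrite -scalemxAr -scalemxAl mxE mulmxA -[_ *m a^T *m y]mulmxA [in LHS]mxE.
by rewrite big_ord1 (dotmxC y a) expr2.
Qed.

Lemma Vmat_psd p y : (forall a, a \in A -> 0 <= p a) -> 0 <= wnorm2 (Vmat A p) y.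
Proof.
move=> p_ge0; rewrite wnorm2_Vmat big_seq; apply: sumr_ge0 => a aA.
by rewrite mulr_ge0 ?p_ge0 ?sqr_ge0.
Qed.

Lemma sum_wnorm2_Vmat p B :
  \sum_(a <- A) p a * wnorm2 B a = \tr (B *m Vmat A p).
Proof.
rewrite /Vmat mulmx_sumr raddf_sum /=; apply: eq_bigr => a _.
by rewrite wnorm2_tr -scalemxAr mxtraceZ.
Qed.

Lemma Vmat_delta b :
  uniq A -> b \in A -> Vmat A (fun a => (a == b)%:R) = b *m b^T.
Proof.
move=> uA bA; rewrite /Vmat (bigD1_seq b) //= eqxx scale1r big1 ?addr0 //.
by move=> a /negbTE ->; rewrite scale0r.
Qed.

Lemma dim_mix_split al p q : Vmat A (mix al p q) \in unitmx ->
  n%:R = (1 - al) * \sum_(a <- A) p a * wnorm2 (invmx (Vmat A (mix al p q))) a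
         + al * \sum_(a <- A) q a * wnorm2 (invmx (Vmat A (mix al p q))) a.
Proof.
move=> uV; rewrite !sum_wnorm2_Vmat -!mxtraceZ -raddfD /= !scalemxAr -mulmxDr.
by rewrite -Vmat_mix mulVmx // mxtrace1.
Qed.

Lemma Vmat_le_scalar p y : (forall a, a \in A -> 0 <= p a) -> \sum_(a <- A) p a = 1 ->
  wnorm2 (Vmat A p) y
    <= \big[Num.max/0]_(a <- A) (a^T *m a) 0 0 * (y^T *m y) 0 0.
Proof.
move=> p_ge0 p_sum1; rewrite wnorm2_Vmat -[X in _ <= X]mul1r -p_sum1 mulr_suml.
rewrite big_seq [X in _ <= X]big_seq; apply: ler_sum => a aA.
rewrite ler_wpM2l ?p_ge0 //.
apply: le_trans (sqr_dotmx_le a y) _; rewrite ler_wpM2r ?dotmx_ge0 //.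
exact: (le_bigmax_seq 0 a xpredT (fun a : 'cV[R]_n => (a^T *m a) 0 0) aA isT).
Qed.

End DesignMatrix.

Lemma big_support_subset (T : eqType) (V : nmodType) (S S' : seq T) (f : T -> V) :
  uniq S -> uniq S' -> {subset S' <= S} -> (forall a, a \notin S' -> f a = 0) ->
  \sum_(a <- S) f a = \sum_(a <- S') f a.
Proof.
move=> uS uS' sS'S f0; rewrite (bigID (mem S')) /= [X in _ + X]big1 ?addr0; last first.
  by move=> a /f0.
rewrite -big_filter; apply/perm_big/uniq_perm; rewrite ?filter_uniq // => a.
by rewrite mem_filter andb_idr // => /sS'S.
Qed.

Section Distributions.
Variables (R : realType) (n : nat).
Implicit Types (S : seq 'cV[R]_n) (p q f : 'cV[R]_n -> R).

Lemma is_dist_ge0 S p : is_dist S p -> forall a, 0 <= p a.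
Proof. by case=> p_ge0 p0 _ a; case: (boolP (a \in S)) => [/p_ge0 | /p0 ->]. Qed.

Lemma is_dist_delta S b : uniq S -> b \in S -> is_dist S (fun a => (a == b)%:R).
Proof.
move=> uS bS; split=> [a _ | a aS | ]; first exact: ler0n.
  by case: eqP aS => // ->; rewrite bS.
by rewrite (bigD1_seq b) //= eqxx big1 ?addr0 // => a /negbTE ->.
Qed.

Lemma is_dist_mix S t p q : 0 <= t <= 1 -> is_dist S p -> is_dist S q ->
  is_dist S (mix t p q).
Proof.
case/andP => t_ge0 t_le1 [p_ge0 p0 p1] [q_ge0 q0 q1]; rewrite /mix; split.
- by move=> a aS; rewrite addr_ge0 ?mulr_ge0 ?p_ge0 ?q_ge0 ?subr_ge0.
- by move=> a aS; rewrite p0 ?q0 // !mulr0 addr0.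
- by rewrite big_split /= -!mulr_sumr p1 q1 !mulr1 subrK.
Qed.

Lemma dist_mean_le_bigmax S p f : is_dist S p ->
  \sum_(a <- S) p a * f a <= \big[Num.max/0]_(a <- S) f a.
Proof.
case=> p_ge0 _ p1; rewrite -[X in _ <= X]mul1r -p1 mulr_suml.
rewrite big_seq [X in _ <= X]big_seq; apply: ler_sum => a aS.
by rewrite ler_wpM2l ?p_ge0 // (le_bigmax_seq 0 a xpredT f aS isT).
Qed.

Lemma Vmat_dist_psd (A S : seq 'cV[R]_n) p y :
  is_dist S p -> 0 <= wnorm2 (Vmat A p) y.
Proof. by move=> p_dist; apply: Vmat_psd => a _; exact: is_dist_ge0 p_dist a. Qed.

End Distributions.

Section OptimalDesign.
Variables (R : realType) (n : nat) (A Al : seq 'cV[R]_n) (poff : 'cV[R]_n -> R).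
Variable al : R.
Hypotheses (uA : uniq A) (uAl : uniq Al) (sAlA : {subset Al <= A}).
Hypotheses (poff_dist : is_dist A poff) (al_ge0 : 0 <= al) (al_lt1 : al < 1).

Local Notation V p := (Vmat A (mix al p poff)).

Let V_psd p y : is_dist Al p -> 0 <= wnorm2 (V p) y.
Proof.
move=> p_dist; apply: Vmat_psd => a _.
by rewrite /mix addr_ge0 ?mulr_ge0 ?subr_ge0 ?(ltW al_lt1) ?(is_dist_ge0 p_dist)
  ?(is_dist_ge0 poff_dist).
Qed.

Let sum_dist_Al p f : is_dist Al p ->
  \sum_(a <- A) p a * f a = \sum_(a <- Al) p a * f a.
Proof. by case=> _ p0 _; apply: big_support_subset => // a /p0 ->; rewrite mul0r. Qed.

Lemma dim_le_design p : is_dist Al p -> V p \in unitmx ->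
  n%:R <= (1 - al) * gfun A Al (mix al p poff)
          + al * \sum_(a <- A) poff a * wnorm2 (invmx (V p)) a.
Proof.
move=> p_dist uV; rewrite {1}(dim_mix_split uV) lerD2r.
rewrite ler_wpM2l ?subr_ge0 ?(ltW al_lt1) //.
by rewrite sum_dist_Al // /gfun; apply: dist_mean_le_bigmax.
Qed.

Variable pstar : 'cV[R]_n -> R.
Hypotheses (pstar_dist : is_dist Al pstar) (uV : V pstar \in unitmx).

Local Notation nV a := (wnorm2 (invmx (V pstar)) a).
Local Notation s := (\sum_(a <- A) pstar a * nV a).

Let nV_ge0 a : 0 <= nV a.
Proof. by apply: wnorm2_invmx_ge0 => //; [exact: trmx_Vmat | move=> y; exact: V_psd]. Qed.

Lemma gfun_mix_le_offline : 0 < al -> Vmat A poff \in unitmx ->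
  gfun A Al (mix al pstar poff) <= al^-1 * gfun A A poff.
Proof.
move=> al_gt0 uVoff; rewrite /gfun big_seq; apply: bigmax_le => [|b bAl].
  by rewrite mulr_ge0 ?invr_ge0 ?(ltW al_gt0) //; exact: bigmax_ge_id.
apply: (@le_trans _ _ (wnorm2 (invmx (al *: Vmat A poff)) b)).
  apply: wnorm2_invmx_le; rewrite ?unitmxZ ?unitfE ?gt_eqF //.
  - by rewrite linearZ /= trmx_Vmat.
  - by move=> y; rewrite wnorm2Z mulr_ge0 ?(ltW al_gt0) // (Vmat_dist_psd _ _ poff_dist).
  - move=> y; rewrite Vmat_mix wnorm2D lerDr wnorm2Z.
    by rewrite mulr_ge0 ?subr_ge0 ?(ltW al_lt1) // (Vmat_dist_psd _ _ pstar_dist).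
rewrite invmxZ ?unitmxZ ?unitfE ?gt_eqF // wnorm2Z ler_wpM2l ?invr_ge0 ?(ltW al_gt0) //.
exact: (le_bigmax_seq 0 b xpredT _ (sAlA bAl) isT).
Qed.

Let shift_unitmx c : 0 < c -> c%:M + al *: Vmat A poff \in unitmx.
Proof.
move=> c_gt0; apply: pd_unitmx => x x_neq0.
rewrite wnorm2D -scalemx1 !wnorm2Z wnorm2_1 ltr_pwDl ?mulr_gt0 ?dotmx_gt0 //.
by rewrite mulr_ge0 // (Vmat_dist_psd _ _ poff_dist).
Qed.

(* V <= N := c I + al V_off; inverting, sum_a poff(a) ||a||^2_{V^-1} is at least
   tr(N^-1 V_off) = (n - c tr(N^-1)) / al. *)
Lemma design_le_trace_shift c : 0 < c -> 0 < al ->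
  (forall y, (1 - al) * wnorm2 (Vmat A pstar) y <= c * (y^T *m y) 0 0) ->
  (1 - al) * s <= c * \tr (invmx (c%:M + al *: Vmat A poff)).
Proof.
move=> c_gt0 al_gt0 Vstar_le; set N := c%:M + al *: Vmat A poff.
have wN x : wnorm2 N x = c * (x^T *m x) 0 0 + al * wnorm2 (Vmat A poff) x.
  by rewrite wnorm2D wnorm2Z -scalemx1 wnorm2Z wnorm2_1.
have uN : N \in unitmx := shift_unitmx c_gt0.
have VN y : wnorm2 (V pstar) y <= wnorm2 N y.
  by rewrite wN Vmat_mix wnorm2D !wnorm2Z lerD2r.
set SoN := \sum_(a <- A) poff a * wnorm2 (invmx N) a.
have SoN_le : SoN <= \sum_(a <- A) poff a * nV a.
  apply: ler_sum => a _; rewrite ler_wpM2l ?(is_dist_ge0 poff_dist) //.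
  by apply: wnorm2_invmx_le => // [|y]; [exact: trmx_Vmat | exact: V_psd].
have alSoN : al * SoN = n%:R - c * \tr (invmx N).
  rewrite /SoN sum_wnorm2_Vmat -mxtraceZ scalemxAr.
  rewrite (_ : al *: _ = N - c%:M); last by rewrite /N addrAC subrr add0r.
  by rewrite mulmxBr mulVmx // mul_mx_scalar raddfB /= mxtrace1 mxtraceZ.
have dimE := dim_mix_split uV.
have := ler_wpM2l (ltW al_gt0) SoN_le; lra.
Qed.

Let max_sqnorm := \big[Num.max/0]_(a <- A) (a^T *m a) 0 0.

Lemma design_le_spectral (lam : 'I_n -> R) :
  char_poly (Vmat A poff) = \prod_(k < n) ('X - (lam k)%:P) ->
  (1 - al) * s <= \sum_(k < n) (1 + al / (1 - al) * (lam k / max_sqnorm))^-1.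
Proof.
move=> chV; have oma_gt0 : 0 < 1 - al by rewrite subr_gt0.
have s_le_dim : (1 - al) * s <= n%:R.
  rewrite [X in _ <= X](dim_mix_split uV) lerDl mulr_ge0 // sumr_ge0 // => a _.
  by rewrite mulr_ge0 ?(is_dist_ge0 poff_dist) ?nV_ge0.
have [al0 | al_neq0] := eqVneq al 0.
  rewrite [X in _ <= X](eq_bigr (fun=> 1)) ?sumr_const ?card_ord // => k _.
  by rewrite al0 !mul0r addr0 invr1.
have [M0 | M_neq0] := eqVneq max_sqnorm 0.
  rewrite [X in _ <= X](eq_bigr (fun=> 1)) ?sumr_const ?card_ord // => k _.
  by rewrite M0 invr0 !mulr0 addr0 invr1.
have al_gt0 : 0 < al by rewrite lt0r al_neq0.
have M_gt0 : 0 < max_sqnorm by rewrite lt0r M_neq0; exact: bigmax_ge_id.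
set c := (1 - al) * max_sqnorm; have c_gt0 : 0 < c by rewrite mulr_gt0.
have term k : c / (c + al * lam k) = (1 + al / (1 - al) * (lam k / max_sqnorm))^-1.
  by rewrite -invf_div /c; congr (_^-1); field; rewrite M_neq0 gt_eqF.
apply: le_trans (design_le_trace_shift c_gt0 al_gt0 _) _.
  move=> y; rewrite -mulrA ler_wpM2l ?(ltW oma_gt0) //.
  apply: Vmat_le_scalar => [a _|]; first exact: is_dist_ge0 pstar_dist a.
  by case: pstar_dist => _ p0 p1; rewrite (big_support_subset uA uAl sAlA p0).
rewrite (mxtrace_invmx_pencil chV al_neq0 (shift_unitmx c_gt0)) mulr_sumr.
by rewrite (eq_bigr _ (fun k _ => term k)).
Qed.

Hypothesis pstar_opt : forall p, is_dist Al p -> V p \in unitmx ->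
  ln (\det (V p)) <= ln (\det (V pstar)).

(* First-order optimality: moving pstar towards the point mass at b changes
   det V by the factor det(1 + t V^-1 E) = 1 + t tr(V^-1 E) + O(t^2). *)
Lemma opt_wnorm2_le_mean b : b \in Al -> nV b <= s.
Proof.
move=> bAl; rewrite leNgt; apply/negP => s_lt_nVb.
set E := (1 - al) *: (b *m b^T - Vmat A pstar).
set pt := fun t => mix t pstar (fun a => (a == b)%:R).
have VtE t : V (pt t) = V pstar + t *: E.
  rewrite /pt !Vmat_mix Vmat_delta ?sAlA // /E.
  by apply/matrixP => i j; rewrite !mxE; ring.
have detV_gt0 : 0 < \det (V pstar) by apply: psd_det_gt0 => // y; exact: V_psd.
have [P0 P1] := coef_det_pencil E uV.
set P := \det _ in P0 P1.
have trE : \tr (invmx (V pstar) *m E) = (1 - al) * (nV b - s).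
  by rewrite /E -scalemxAr mxtraceZ mulmxBr raddfB /= -wnorm2_tr -sum_wnorm2_Vmat.
have [|t /andP[t_gt0 t_le1]] := poly_lt_horner_right (Q := P).
  by rewrite P1 trE !mulr_gt0 ?subr_gt0.
rewrite P0 /P horner_det_pencil -VtE => detV_lt.
have detVt_gt0 := lt_trans detV_gt0 detV_lt.
have pt_dist : is_dist Al (pt t).
  by apply: is_dist_mix => //; [rewrite (ltW t_gt0) | exact: is_dist_delta].
have uVt : V (pt t) \in unitmx by rewrite unitmxE unitfE gt_eqF.
by have := pstar_opt pt_dist uVt; rewrite leNgt ltr_ln ?posrE // detV_lt.
Qed.

Lemma gfun_opt : gfun A Al (mix al pstar poff) = s.
Proof.
apply/le_anti/andP; split.
  rewrite /gfun big_seq; apply: bigmax_le => [|b bAl]; last exact: opt_wnorm2_le_mean.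
  by apply: sumr_ge0 => a _; rewrite mulr_ge0 ?(is_dist_ge0 pstar_dist) ?nV_ge0.
by rewrite sum_dist_Al //; exact: dist_mean_le_bigmax.
Qed.

End OptimalDesign.

Lemma offline_weight_ratio (R : realFieldType) (T Toff : nat) : (0 < T)%N ->
  let al : R := Toff%:R / (Toff + T)%:R in
  [/\ 0 <= al, al < 1 & Toff%:R / T%:R = al / (1 - al)].
Proof.
move=> T_gt0 al.
have TT_gt0 : 0 < (Toff + T)%:R :> R by rewrite ltr0n addn_gt0 T_gt0 orbT.
have omaE : 1 - al = T%:R / (Toff + T)%:R.
  by rewrite /al natrD; field; rewrite -natrD gt_eqF.
split; first by rewrite divr_ge0.
  by rewrite -subr_gt0 omaE divr_gt0 // ltr0n.
by rewrite omaE /al natrD; field; rewrite -natrD !gt_eqF // ltr0n.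
Qed.

Theorem lemma4p4 (R : realType) (d : nat) (A Al : seq 'cV[R]_d)
  (poff : 'cV[R]_d -> R) (T Toff : nat) (lam : 'I_d -> R)
  (pstar : 'cV[R]_d -> R) :
  uniq A -> spans A -> is_dist A poff -> (1 <= T)%N ->
  is_sorted_spectrum (Vmat A poff) lam ->
  uniq Al -> {subset Al <= A} -> Al != [::] ->
  let al : R := Toff%:R / (Toff + T)%:R in
  is_dist Al pstar ->
  Vmat A (mix al pstar poff) \in unitmx ->
  (forall p, is_dist Al p -> Vmat A (mix al p poff) \in unitmx ->
     ln (\det (Vmat A (mix al p poff)))
       <= ln (\det (Vmat A (mix al pstar poff)))) ->
  let pt := mix al pstar poff in
  [/\ d%:R = (1 - al) * gfun A Al pt
             + al * \sum_(a <- A) poff a * wnorm2 (invmx (Vmat A pt)) a,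
      (((1 - al) * gfun A Al pt)%:E <= deff A poff T Toff lam)%E
    & forall p, is_dist Al p -> Vmat A (mix al p poff) \in unitmx ->
        d%:R <= (1 - al) * gfun A Al (mix al p poff)
               + al * \sum_(a <- A) poff a
                        * wnorm2 (invmx (Vmat A (mix al p poff))) a].
Proof.
(* spans A and Al != [::] follow from the invertibility of V and from
   is_dist Al pstar. *)
move=> uA _ poff_dist T_gt0 [chV _] uAl sAlA _ al pstar_dist uV pstar_opt pt.
have [al_ge0 al_lt1 ratio] := offline_weight_ratio R Toff T_gt0.
have gE := gfun_opt uA uAl sAlA poff_dist al_ge0 al_lt1 pstar_dist uV pstar_opt.
split; last exact: dim_le_design.
  by rewrite gE; exact: dim_mix_split.
rewrite /deff; cbv zeta; rewrite le_min lee_fin; apply/andP; split.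
  rewrite gE ratio.
  exact: (design_le_spectral uA uAl sAlA poff_dist al_ge0 al_lt1 pstar_dist uV chV).
case: ifP => [/andP[Toff_gt0 uVoff] | _]; last exact: leey.
have al_gt0 : 0 < al by rewrite divr_gt0 // ltr0n // addn_gt0 Toff_gt0.
rewrite lee_fin -[T%:R / _]invf_div ratio invf_div -mulrA.
by rewrite ler_wpM2l ?subr_ge0 ?(ltW al_lt1) // gfun_mix_le_offline.
Qed.
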